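(* Fix a class $c$ and an unlabeled node $v_u$ whose true class is $c$. Suppose $v_u$ has $n\ge0$ unlabeled neighbors and $m\ge0$ labeled neighbors, with $m+n\ge1$, and let $p$ be the probability that an existing linked labeled neighbor is labeled as $c$. Each node $v_j$ carries a score $s_{jc}$ (predicted probability of class $c$ before the final aggregation) whose expectation depends only on its type: $\mu_a=\mathbb{E}(s_{ac})$ for unlabeled nodes, $\mu_b=\mathbb{E}(s_{bc})$ for labeled nodes whose given label is $c$, $\mu_d=\mathbb{E}(s_{dc})$ for labeled nodes whose given label is not $c$, and $\mu_p=\mathbb{E}(s_{pc})$ for nodes $v_p$ provided with a pseudo label. The prediction for $v_u$ is $y_{uc}=\frac{1}{d_u}\sum_{j\in\mathcal{N}(v_u)}s_{jc}$, the average over its $d_u$ neighbors. If $\mu_p>\max\bigl(\mu_a,\;p\mu_b+(1-p)\mu_d\bigr)$, then linking $v_u$ with pseudo-labeled nodes improves its expected predicted probability of class $c$: letting $y^{(k)}_{uc}$ be the prediction after additionally linking $v_u$ with $k$ pseudo-labeled nodes (average over $m+n+k$ neighbors), $\mathbb{E}(y^{(k)}_{uc})>\mathbb{E}(y_{uc})$ for every $k\ge1$, and $\mathbb{E}(y^{(k)}_{uc})$ is strictly increasing in $k$.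
   Context: Setting: semi-supervised node classification with a trained graph convolutional network on a graph with a small set of noisily labeled nodes, extended with a set of unlabeled nodes given pseudo labels. Final predictions are $\mathbf{Y}=\tilde{\mathbf{A}}\mathbf{S}$ with $s_{ic}$ (entries of the last-layer pre-aggregation output $\mathbf{S}$) treated as the predicted probability that $v_i$ belongs to class $c$; the simplified aggregation is the plain average over neighbors. Expectations are over the random label noise and scores; the expected prediction before linking is $\mathbb{E}(y_{uc})=\frac{n\mu_a+pm\mu_b+(1-p)m\mu_d}{m+n}$. *)

From mathcomp Require Import all_boot all_order all_algebra.
Set Implicit Arguments. Unset Strict Implicit. Unset Printing Implicit Defensive.
Import Order.TTheory GRing.Theory Num.Theory.
Local Open Scope ring_scope.

Inductive ntype := Unlabeled | Labeled | Pseudo.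

(* A labeled neighbour
   carries the (noisy) label c with probability p (expected score mu_b) and a
   label different from c with probability 1-p (expected score mu_d). *)
Definition escore (R : realFieldType) (mu_a mu_b mu_d mu_p p : R) (t : ntype) : R :=
  match t with
  | Unlabeled => mu_a
  | Labeled => p * mu_b + (1 - p) * mu_d
  | Pseudo => mu_p
  end.

Definition nbhd (n m k : nat) : seq ntype :=
  nseq n Unlabeled ++ nseq m Labeled ++ nseq k Pseudo.

(* Expected prediction E(y^{(k)}_uc) = E((1/d_u) * sum_{j in N(v_u)} s_jc)
   = (1/d_u) * sum_j E(s_jc), by linearity of expectation. *)
Definition exp_pred (R : realFieldType) (mu_a mu_b mu_d mu_p p : R)
    (n m k : nat) : R :=
  (\sum_(t <- nbhd n m k) escore mu_a mu_b mu_d mu_p p t)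
    / (size (nbhd n m k))%:R.

(** Each unlabeled or labeled neighbour has expected score below
    [mu_p], so their mean [e0] is below [mu_p]; adding [k] pseudo-labeled
    neighbours turns the prediction into the weighted mean of [e0] (weight
    [m + n]) and [mu_p] (weight [k]), which moves strictly towards the larger
    value [mu_p] as its weight [k] grows. *)

From mathcomp Require Import all_boot all_order all_algebra.
From mathcomp Require Import lra.
Set Implicit Arguments. Unset Strict Implicit. Unset Printing Implicit Defensive.
Import Order.TTheory GRing.Theory Num.Theory.
Local Open Scope ring_scope.

Section Mean.
Variables (R : realFieldType) (T : Type) (F : T -> R).

Definition mean (s : seq T) : R := (\sum_(t <- s) F t) / (size s)%:R.

Lemma sum_lt_size_mul (x : R) (s : seq T) :
  (0 < size s)%N -> all (fun t => F t < x) s -> \sum_(t <- s) F t < (size s)%:R * x.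
Proof.
elim: s => [|t s IH] // _ /= /andP[Ftx Fsx].
rewrite big_cons -addn1 natrD mulrDl mul1r addrC.
case: s IH Fsx => [|t' s] IH Fsx; first by rewrite big_nil mul0r !add0r.
by apply: ltrD => //; apply: IH.
Qed.

Lemma mean_lt (x : R) (s : seq T) :
  (0 < size s)%N -> all (fun t => F t < x) s -> mean s < x.
Proof.
move=> s_gt0 Fsx; have size_gt0 : 0 < (size s)%:R :> R by rewrite ltr0n.
by rewrite /mean ltr_pdivrMr // mulrC; apply: sum_lt_size_mul.
Qed.

Lemma mean_cat_nseq (s : seq T) (k : nat) (y : T) :
  (0 < size s)%N ->
  mean (s ++ nseq k y) =
    ((size s)%:R * mean s + k%:R * F y) / ((size s)%:R + k%:R).
Proof.
move=> s_gt0; have size_nz : (size s)%:R != 0 :> R by rewrite pnatr_eq0 -lt0n.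
rewrite /mean big_cat big_nseq iter_addr_0 size_cat size_nseq natrD.
by rewrite mulrCA divff // mulr1 mulr_natl.
Qed.

End Mean.

Lemma weighted_mean_ltr (R : realFieldType) (a b w k1 k2 : R) :
  a < b -> 0 < w -> 0 <= k1 -> k1 < k2 ->
  (w * a + k1 * b) / (w + k1) < (w * a + k2 * b) / (w + k2).
Proof.
move=> ab w_gt0 k1_ge0 k12.
have k1_pos : 0 < w + k1 by lra.
have k2_pos : 0 < w + k2 by lra.
rewrite ltr_pdivrMr // mulrAC ltr_pdivlMr //.
have gap : 0 < w * ((k2 - k1) * (b - a)) by rewrite !mulr_gt0 // subr_gt0.
nra.
Qed.

Lemma nbhd_pseudo (n m k : nat) : nbhd n m k = nbhd n m 0 ++ nseq k Pseudo.
Proof. by rewrite /nbhd cats0 catA. Qed.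

Lemma exp_pred_mean (R : realFieldType) (mu_a mu_b mu_d mu_p p : R)
    (n m k : nat) :
  exp_pred mu_a mu_b mu_d mu_p p n m k =
    mean (escore mu_a mu_b mu_d mu_p p) (nbhd n m k).
Proof. by []. Qed.

Lemma size_nbhd (n m k : nat) : size (nbhd n m k) = (n + m + k)%N.
Proof. by rewrite /nbhd !size_cat !size_nseq addnA. Qed.

Theorem theorem2 (R : realFieldType) (mu_a mu_b mu_d mu_p p : R) (n m : nat) :
  0 <= p <= 1 ->
  (1 <= m + n)%N ->
  Num.max mu_a (p * mu_b + (1 - p) * mu_d) < mu_p ->
  (forall k : nat, (1 <= k)%N ->
     exp_pred mu_a mu_b mu_d mu_p p n m 0 < exp_pred mu_a mu_b mu_d mu_p p n m k) /\
  (forall k1 k2 : nat, (k1 < k2)%N ->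
     exp_pred mu_a mu_b mu_d mu_p p n m k1 < exp_pred mu_a mu_b mu_d mu_p p n m k2).
Proof.
move=> _ mn_gt0; rewrite gt_max => /andP[a_lt l_lt].
set e := escore mu_a mu_b mu_d mu_p p.
have nbhd0_gt0 : (0 < size (nbhd n m 0))%N by rewrite size_nbhd addn0 addnC.
have e0_lt : mean e (nbhd n m 0) < mu_p.
  by apply: mean_lt => //; rewrite /nbhd !all_cat !all_nseq /= a_lt l_lt !orbT.
have increasing k1 k2 : (k1 < k2)%N ->
    exp_pred mu_a mu_b mu_d mu_p p n m k1 < exp_pred mu_a mu_b mu_d mu_p p n m k2.
  move=> k12; rewrite !exp_pred_mean (nbhd_pseudo _ _ k1) (nbhd_pseudo _ _ k2).
  rewrite !mean_cat_nseq //.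
  by apply: weighted_mean_ltr; rewrite ?ltr0n ?ler_nat ?ltr_nat.
by split => // k; apply: increasing.
Qed.
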